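(* Let $I=[a,b]$ be a compact interval, $r\ge1$ an integer, $g\in C^r(I,\mathbb R)$, and put $C_r:=\|g^{(r)}\|_{L^\infty(I)}$. Then for every $0<\lambda\le\|g\|_\infty$ there is a finite family of pairwise disjoint intervals $I_{\lambda,i}$, $i\in\mathcal I_\lambda$, such that: (i) $|\mathcal I_\lambda|\le 30r\big(1+|I|\,C_r^{1/r}\lambda^{-1/r}\big)$; (ii) with $V_\lambda:=\bigcup_{i\in\mathcal I_\lambda}I_{\lambda,i}$, we have $\{t\in I:|g(t)|<\lambda\}\subset V_\lambda\subset\{t\in I:|g(t)|<8\lambda\}$.
   Context: $\|g\|_\infty$ denotes the supremum of $|g|$ over $I$, and $|I|=b-a$ is the length of $I$. *)

From Stdlib Require Import Reals List.
From Coquelicot Require Import Coquelicot.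
Open Scope R_scope.

Definition Icc (a b : R) (t : R) : Prop := a <= t <= b.

Definition is_interval (J : R -> Prop) : Prop :=
  forall x y z, J x -> J z -> x <= y <= z -> J y.

(* f' is the derivative of f on [a,b], relative to [a,b]
   (one-sided at the endpoints). *)
Definition derive_on (a b : R) (f f' : R -> R) : Prop :=
  forall x, Icc a b x ->
    filterlim (fun y => (f y - f x) / (y - x))
      (within (fun y => Icc a b y /\ y <> x) (locally x))
      (locally (f' x)).

Definition continuous_on_Icc (a b : R) (f : R -> R) : Prop :=
  forall x, Icc a b x ->
    filterlim f (within (Icc a b) (locally x)) (locally (f x)).

(* D k = g^(k) for k <= r and g is C^r on [a,b]. *)
Definition Cr_derivs (a b : R) (r : nat) (g : R -> R) (D : nat -> R -> R) : Prop :=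
  (forall t, D O t = g t) /\
  (forall k, (k < r)%nat -> derive_on a b (D k) (D (S k))) /\
  continuous_on_Icc a b (D r).

Definition supnorm (a b : R) (f : R -> R) : R :=
  real (Lub_Rbar (fun y => exists t, Icc a b t /\ y = Rabs (f t))).

Definition rootn (r : nat) (x : R) : R :=
  if Rle_dec x 0 then 0 else Rpower x (/ INR r).

Definition pairwise_disjoint (L : list (R -> Prop)) : Prop :=
  forall i j, (i < length L)%nat -> (j < length L)%nat -> i <> j ->
    forall t, ~ (nth i L (fun _ => False) t /\ nth j L (fun _ => False) t).

Definition union_of (L : list (R -> Prop)) (t : R) : Prop :=
  exists J, In J L /\ J t.

(* Count oscillations of g around the levels +-3 lam/2: a sorted family
   of points where g - c alternates in sign with amplitude lam/2.  By iterated
   mean value theorems (divided differences), r+1 such points inside a window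
   of length d force |g^(r)| >= (lam/2)(2/d)^r somewhere; so if
   C_r d^r < (lam/2) 2^r, every window of length d carries at most r
   oscillations around each level.  In a window, a greedy cover of
   {|g| < lam} by intervals on which |g| < 2 lam spends one oscillation per
   interval, giving at most 2r intervals per window.  Taking
   d = |I| / (2P+1), with P = |I| C_r^(1/r) lam^(-1/r), about 2P+2 windows
   cover I, hence at most 4r(1+P) <= 30r(1+P) intervals. *)
From Stdlib Require Import Reals List Lra Lia Classical Wf_nat.
From Coquelicot Require Import Coquelicot.
Open Scope R_scope.
Set Bullet Behavior "Strict Subproofs".

Definition continuous_eps (a b : R) (f : R -> R) : Prop :=
  forall x, Icc a b x -> forall e, 0 < e -> exists h, 0 < h /\
    forall y, Icc a b y -> Rabs (y - x) < h -> Rabs (f y - f x) < e.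

Lemma continuous_on_Icc_eps (a b : R) (f : R -> R) :
  continuous_on_Icc a b f -> continuous_eps a b f.
Proof.
  intros Hf x Hx e He.
  specialize (Hf x Hx). rewrite filterlim_locally in Hf.
  destruct (Hf (mkposreal e He)) as [[h hp] Hh].
  exists h; split; auto. intros y Hy Hyx. apply Hh; auto.
Qed.

Lemma derive_on_eps (a b : R) (f f' : R -> R) : derive_on a b f f' ->
  forall x, Icc a b x -> forall e, 0 < e -> exists h, 0 < h /\
    forall y, Icc a b y -> y <> x -> Rabs (y - x) < h ->
      Rabs ((f y - f x) / (y - x) - f' x) < e.
Proof.
  intros Hf x Hx e He.
  specialize (Hf x Hx). rewrite filterlim_locally in Hf.
  destruct (Hf (mkposreal e He)) as [[h hp] Hh].
  exists h; split; auto. intros y Hy Hne Hyx. apply Hh; auto.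
Qed.

(* Differentiability on [a,b] implies continuity on [a,b]: near x the
   difference quotient is bounded by |f' x| + 1. *)
Lemma derive_on_continuous (a b : R) (f f' : R -> R) :
  derive_on a b f f' -> continuous_eps a b f.
Proof.
  intros Hf x Hx e He.
  destruct (derive_on_eps a b f f' Hf x Hx 1 Rlt_0_1) as [h [hp Hh]].
  set (M := Rabs (f' x) + 1).
  assert (HM : 0 < M) by (unfold M; pose proof (Rabs_pos (f' x)); lra).
  exists (Rmin h (e / M)); split.
  { apply Rmin_pos; auto. apply Rdiv_lt_0_compat; auto. }
  intros y Hy Hyx.
  destruct (Req_dec y x) as [->|Hne].
  { unfold Rminus. rewrite Rplus_opp_r, Rabs_R0; auto. }
  pose proof (Rmin_l h (e / M)). pose proof (Rmin_r h (e / M)).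
  assert (Hq : Rabs ((f y - f x) / (y - x)) <= M).
  { specialize (Hh y Hy Hne ltac:(lra)).
    pose proof (Rabs_triang_inv ((f y - f x) / (y - x)) (f' x)). unfold M. lra. }
  assert (Hyx0 : 0 < Rabs (y - x)) by (apply Rabs_pos_lt; lra).
  replace (f y - f x) with ((f y - f x) / (y - x) * (y - x)) by (field; lra).
  rewrite Rabs_mult.
  apply Rle_lt_trans with (M * Rabs (y - x)); [apply Rmult_le_compat_r; lra|].
  replace e with (M * (e / M)) by (field; lra).
  apply Rmult_lt_compat_l; lra.
Qed.

(* |f| and -f inherit continuity; they are the functions whose sublevel
   sets the greedy cover takes infima of. *)
Lemma continuous_eps_abs (a b : R) (f : R -> R) :
  continuous_eps a b f -> continuous_eps a b (fun t => Rabs (f t)).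
Proof.
  intros Hf x Hx e He. destruct (Hf x Hx e He) as [h [hp Hh]].
  exists h; split; auto. intros y Hy Hyx.
  eapply Rle_lt_trans; [apply Rabs_triang_inv2 | apply Hh; auto].
Qed.

Lemma continuous_eps_opp (a b : R) (f : R -> R) :
  continuous_eps a b f -> continuous_eps a b (fun t => - f t).
Proof.
  intros Hf x Hx e He. destruct (Hf x Hx e He) as [h [hp Hh]].
  exists h; split; auto. intros y Hy Hyx.
  replace (- f y - - f x) with (- (f y - f x)) by ring. rewrite Rabs_Ropp; auto.
Qed.

(* The retraction of R onto [a,b]; composing with it turns functions on [a,b]
   into functions on R, so that the Stdlib theorems on R apply. *)
Definition clamp (a b x : R) : R := Rmax a (Rmin b x).

Lemma clamp_in (a b x : R) : a <= b -> Icc a b (clamp a b x).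
Proof. intros. unfold clamp, Icc, Rmax, Rmin. repeat destruct Rle_dec; lra. Qed.

Lemma clamp_id (a b x : R) : Icc a b x -> clamp a b x = x.
Proof. intros [H1 H2]. unfold clamp, Rmax, Rmin. repeat destruct Rle_dec; lra. Qed.

Lemma clamp_lipschitz (a b x y : R) : a <= b ->
  Rabs (clamp a b y - clamp a b x) <= Rabs (y - x).
Proof.
  intros. unfold clamp, Rmax, Rmin.
  repeat destruct Rle_dec; unfold Rabs; repeat destruct Rcase_abs; lra.
Qed.

Lemma clamp_continuity_pt (a b : R) (f : R -> R) : a <= b -> continuous_eps a b f ->
  forall x, continuity_pt (fun t => f (clamp a b t)) x.
Proof.
  intros Hab Hf x e He.
  destruct (Hf (clamp a b x) (clamp_in a b x Hab) e He) as [h [hp Hh]].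
  exists h; split; auto. intros y [_ Hy]. simpl in *. unfold R_dist in *.
  apply Hh; [apply clamp_in; auto|].
  eapply Rle_lt_trans; [apply clamp_lipschitz; auto | exact Hy].
Qed.

Lemma clamp_is_derive (a b : R) (f f' : R -> R) (x : R) :
  derive_on a b f f' -> a < x < b -> is_derive (fun t => f (clamp a b t)) x (f' x).
Proof.
  intros Hf Hx. apply is_derive_Reals. intros e He.
  assert (Hxi : Icc a b x) by (unfold Icc; lra).
  destruct (derive_on_eps a b f f' Hf x Hxi e He) as [h [hp Hh]].
  assert (Hd : 0 < Rmin h (Rmin (x - a) (b - x))) by (repeat apply Rmin_pos; lra).
  exists (mkposreal _ Hd). intros k Hk Hkd. simpl in Hkd.
  pose proof (Rmin_l h (Rmin (x - a) (b - x))).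
  pose proof (Rmin_r h (Rmin (x - a) (b - x))).
  pose proof (Rmin_l (x - a) (b - x)). pose proof (Rmin_r (x - a) (b - x)).
  pose proof (Rle_abs k). pose proof (Rle_abs (- k)). rewrite Rabs_Ropp in *.
  assert (Hin : Icc a b (x + k)) by (unfold Icc; lra).
  rewrite (clamp_id a b (x + k) Hin), (clamp_id a b x Hxi).
  replace k with ((x + k) - x) at 2 by ring.
  apply Hh; auto; [lra | replace (x + k - x) with k by ring; lra].
Qed.

Lemma MVT_Icc (a b : R) (f f' : R -> R) (x y : R) :
  derive_on a b f f' -> a <= x -> x <= y -> y <= b ->
  exists c, x <= c <= y /\ f y - f x = f' c * (y - x).
Proof.
  intros Hf Hax Hxy Hyb.
  assert (Hab : a <= b) by lra.
  pose proof (clamp_continuity_pt a b f Hab (derive_on_continuous a b f f' Hf)) as Hc.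
  destruct (MVT_gen (fun t => f (clamp a b t)) x y f') as [c [Hc1 Hc2]].
  - intros t Ht. rewrite Rmin_left, Rmax_right in Ht by lra.
    apply clamp_is_derive; auto; lra.
  - intros t _. apply Hc.
  - rewrite Rmin_left, Rmax_right in Hc1 by lra.
    exists c; split; auto.
    rewrite (clamp_id a b x), (clamp_id a b y) in Hc2 by (unfold Icc; lra). auto.
Qed.

(* A continuous function on [a,b] is bounded by its sup norm: the maximum of
   |f| is attained, so the least upper bound is finite. *)
Lemma supnorm_bound (a b : R) (f : R -> R) : a <= b -> continuous_eps a b f ->
  forall t, Icc a b t -> Rabs (f t) <= supnorm a b f.
Proof.
  intros Hab Hf.
  destruct (continuity_ab_maj (fun t => Rabs (f (clamp a b t))) a b Hab) as [Mx [HM HMx]].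
  { intros c _. apply (clamp_continuity_pt a b _ Hab (continuous_eps_abs a b f Hf)). }
  set (E := fun y => exists t, Icc a b t /\ y = Rabs (f t)).
  assert (Hub : forall y, E y -> y <= Rabs (f Mx)).
  { intros y [t [Ht ->]]. specialize (HM t Ht).
    rewrite (clamp_id a b t Ht), (clamp_id a b Mx HMx) in HM. auto. }
  intros t Ht. unfold supnorm. fold E.
  destruct (Lub_Rbar_correct E) as [Hlub1 Hlub2].
  assert (Et : E (Rabs (f t))) by (exists t; auto).
  specialize (Hlub1 _ Et).
  assert (Hle : Rbar_le (Lub_Rbar E) (Rabs (f Mx))) by (apply Hlub2; exact Hub).
  destruct (Lub_Rbar E); simpl in *; tauto.
Qed.

Definition alternates (f : R -> R) (c mu s : R) (n : nat) (x : nat -> R) : Prop :=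
  (forall i, (i < n)%nat -> x i <= x (S i)) /\
  (forall i, (i <= n)%nat -> mu <= s * (-1) ^ i * (f (x i) - c)).

Lemma sorted_le (n : nat) (x : nat -> R) :
  (forall i, (i < n)%nat -> x i <= x (S i)) ->
  forall i j, (i <= j <= n)%nat -> x i <= x j.
Proof.
  intros Hx i j Hij. induction j as [|j IH].
  - replace i with 0%nat by lia. lra.
  - destruct (Nat.eq_dec i (S j)) as [->|Hne]; [lra|].
    apply Rle_trans with (x j); [apply IH | apply Hx]; lia.
Qed.

Lemma alternates_prefix (f : R -> R) (c mu s : R) (n k : nat) (x : nat -> R) :
  (k <= n)%nat -> alternates f c mu s n x -> alternates f c mu s k x.
Proof. intros Hk [Hx Ha]; split; intros i Hi; [apply Hx | apply Ha]; lia. Qed.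

Lemma alternates_cons (f : R -> R) (c mu s z : R) (n : nat) (x : nat -> R) :
  alternates f c mu s n x -> z <= x O -> mu <= - s * (f z - c) ->
  alternates f c mu (- s) (S n) (fun i => match i with O => z | S i => x i end).
Proof.
  intros [Hx Ha] Hz Hfz. split.
  - intros [|i] Hi; auto. apply Hx. lia.
  - intros [|i] Hi; simpl; [lra|].
    replace (- s * (-1 * (-1) ^ i)) with (s * (-1) ^ i) by ring. apply Ha. lia.
Qed.

(* If u + v = e * h with u, v >= mu > 0 and 0 <= h <= d, then e >= 2 mu / d:
   two alternating values at distance h force a slope of size 2 mu / d. *)
Lemma slope_bound (u v e h mu d : R) : 0 < mu -> 0 < d -> 0 <= h <= d ->
  mu <= u -> mu <= v -> u + v = e * h -> 2 * mu / d <= e.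
Proof.
  intros Hmu Hd Hh Hu Hv Huv.
  assert (Hh0 : 0 < h) by (destruct Hh as [[|<-] _]; [auto | nra]).
  assert (He : 0 < e) by nra.
  apply Rmult_le_reg_r with d; auto.
  replace (2 * mu / d * d) with (2 * mu) by (field; lra). nra.
Qed.

Lemma finite_choice (n : nat) (P : nat -> R -> Prop) :
  (forall i, (i < n)%nat -> exists y, P i y) ->
  exists f : nat -> R, forall i, (i < n)%nat -> P i (f i).
Proof.
  induction n as [|n IH]; intros H.
  - exists (fun _ => 0). intros; lia.
  - destruct IH as [f Hf]; [intros; apply H; lia|].
    destruct (H n ltac:(lia)) as [y Hy].
    exists (fun i => if Nat.eq_dec i n then y else f i).
    intros i Hi. destruct (Nat.eq_dec i n) as [->|Hne]; auto. apply Hf; lia.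
Qed.

Section Alternation.
Variables (a b : R) (r : nat) (D : nat -> R -> R).
Hypothesis Hder : forall k, (k < r)%nat -> derive_on a b (D k) (D (S k)).

(* Divided differences: the mean value theorem between consecutive points
   of an alternating family of D j (of span at most d) yields an alternating
   family of D (j+1) around 0, with one point fewer and amplitude 2 mu / d. *)
Lemma alternation_derivative (j n : nat) (x : nat -> R) (c mu s d : R) :
  (j < r)%nat -> 0 < mu -> 0 < d ->
  a <= x O -> x (S n) <= b -> x (S n) - x O <= d ->
  alternates (D j) c mu s (S n) x ->
  exists y, alternates (D (S j)) 0 (2 * mu / d) (- s) n y /\
    x O <= y O /\ y n <= x (S n).
Proof.
  intros Hj Hmu Hd Ha Hb Hspan [Hx Halt].
  pose proof (sorted_le (S n) x Hx) as Hle.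
  assert (Hmvt : forall i, (i < S n)%nat -> exists y, x i <= y <= x (S i) /\
      D j (x (S i)) - D j (x i) = D (S j) y * (x (S i) - x i)).
  { intros i Hi. apply (MVT_Icc a b); auto.
    - apply Rle_trans with (x O); [lra | apply Hle; lia].
    - apply Rle_trans with (x (S n)); [apply Hle; lia | lra]. }
  destruct (finite_choice (S n) (fun i y => x i <= y <= x (S i) /\
      D j (x (S i)) - D j (x i) = D (S j) y * (x (S i) - x i)) Hmvt) as [y Hy].
  exists y. split; [split|split].
  - intros i Hi. destruct (Hy i ltac:(lia)) as [[_ H1] _].
    destruct (Hy (S i) ltac:(lia)) as [[H2 _] _]. lra.
  - intros i Hi. destruct (Hy i ltac:(lia)) as [_ HD].
    pose proof (Halt i ltac:(lia)) as Hai. pose proof (Halt (S i) ltac:(lia)) as Hasi.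
    assert (Hspan_i : x (S i) - x i <= d).
    { pose proof (Hle O i ltac:(lia)). pose proof (Hle (S i) (S n) ltac:(lia)). lra. }
    apply (slope_bound (s * (-1) ^ i * (D j (x i) - c))
             (s * (-1) ^ S i * (D j (x (S i)) - c)) _ (x (S i) - x i) mu d);
      auto; [pose proof (Hx i ltac:(lia)); lra |].
    simpl. rewrite Rminus_0_r.
    replace (- s * (-1) ^ i * D (S j) (y i) * (x (S i) - x i))
      with (- s * (-1) ^ i * (D (S j) (y i) * (x (S i) - x i))) by ring.
    rewrite <- HD. ring.
  - destruct (Hy O ltac:(lia)) as [[H _] _]. exact H.
  - destruct (Hy n ltac:(lia)) as [[_ H] _]. exact H.
Qed.

Lemma alternation_forces_large_derivative (k : nat) : forall j x c mu s d,
  (j + S k = r)%nat -> 0 < mu -> 0 < d -> (s = 1 \/ s = -1) ->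
  a <= x O -> x (S k) <= b -> x (S k) - x O <= d ->
  alternates (D j) c mu s (S k) x ->
  exists xi, Icc a b xi /\ mu * (2 / d) ^ S k <= Rabs (D r xi).
Proof.
  induction k as [|k IH]; intros j x c mu s d Hjk Hmu Hd Hs Ha Hb Hspan Halt.
  - destruct (alternation_derivative j O x c mu s d ltac:(lia) Hmu Hd Ha Hb Hspan Halt)
      as [y [[_ Hy] [Hy0 Hy1]]].
    exists (y O). split; [unfold Icc; lra|].
    specialize (Hy O ltac:(lia)). replace r with (S j) by lia.
    simpl in Hy. rewrite Rminus_0_r in Hy.
    replace (mu * (2 / d) ^ 1) with (2 * mu / d) by (simpl; field; lra).
    pose proof (Rle_abs (D (S j) (y O))). pose proof (Rle_abs (- D (S j) (y O))).
    rewrite Rabs_Ropp in *. destruct Hs as [-> | ->]; nra.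
  - destruct (alternation_derivative j (S k) x c mu s d ltac:(lia) Hmu Hd Ha Hb Hspan Halt)
      as [y [Hy [Hy0 Hy1]]].
    assert (Hmu' : 0 < 2 * mu / d) by (apply Rdiv_lt_0_compat; lra).
    destruct (IH (S j) y 0 (2 * mu / d) (- s) d ltac:(lia) Hmu' Hd
                ltac:(destruct Hs as [-> | ->]; lra) ltac:(lra) ltac:(lra) ltac:(lra) Hy)
      as [xi [Hxi Hbound]].
    exists xi; split; auto.
    replace (mu * (2 / d) ^ S (S k)) with (2 * mu / d * (2 / d) ^ S k); auto.
    simpl. field. lra.
Qed.
End Alternation.

(* The infimum m of a nonempty set A of points of [a,b] on which a continuous
   h satisfies h <= K still satisfies h m <= K (the condition is closed). *)
Lemma inf_attained (a b K : R) (h : R -> R) (A : R -> Prop) :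
  continuous_eps a b h -> (exists t, A t) -> (forall t, A t -> Icc a b t /\ h t <= K) ->
  exists m, Icc a b m /\ h m <= K /\ (forall t, A t -> m <= t) /\
    (forall p, (forall t, A t -> p <= t) -> p <= m).
Proof.
  intros Hh [t0 Ht0] HA.
  destruct (completeness (fun y => A (- y))) as [M [HM1 HM2]].
  { exists (- a). intros y Hy. destruct (HA _ Hy) as [[? _] _]. lra. }
  { exists (- t0). rewrite Ropp_involutive. auto. }
  assert (Hlow : forall t, A t -> - M <= t).
  { intros t Ht. enough (- t <= M) by lra. apply HM1. rewrite Ropp_involutive. auto. }
  assert (Hglb : forall p, (forall t, A t -> p <= t) -> p <= - M).
  { intros p Hp. enough (M <= - p) by lra. apply HM2. intros y Hy. specialize (Hp _ Hy). lra. }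
  assert (Hm : Icc a b (- M)).
  { destruct (HA t0 Ht0) as [[? ?] _]. split; [apply Hglb | specialize (Hlow t0 Ht0)];
      [intros t Ht; apply HA; auto | lra]. }
  exists (- M). repeat split; try apply Hm; auto.
  destruct (Rle_dec (h (- M)) K) as [|Hgt]; auto. exfalso.
  destruct (Hh (- M) Hm (h (- M) - K) ltac:(lra)) as [e [He Hnear]].
  enough (- M + e <= - M) by lra.
  apply Hglb. intros t Ht. destruct (Rle_dec (- M + e) t) as [|Hlt]; auto. exfalso.
  pose proof (Hlow t Ht). destruct (HA t Ht) as [Hti HtK].
  assert (Rabs (h t - h (- M)) < h (- M) - K).
  { apply Hnear; auto. rewrite Rabs_right; lra. }
  pose proof (Rle_abs (- (h t - h (- M)))). rewrite Rabs_Ropp in *. lra.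
Qed.

Lemma union_cons (K : R -> Prop) (L : list (R -> Prop)) (t : R) :
  union_of (K :: L) t <-> K t \/ union_of L t.
Proof.
  unfold union_of. split.
  - intros [J [[<-|HJ] Ht]]; [left | right]; eauto.
  - intros [H|[J [HJ Ht]]]; [exists K | exists J]; simpl; auto.
Qed.

Lemma union_app (L1 L2 : list (R -> Prop)) (t : R) :
  union_of (L1 ++ L2) t <-> union_of L1 t \/ union_of L2 t.
Proof.
  unfold union_of. split.
  - intros [J [HJ Ht]]. apply in_app_or in HJ. destruct HJ; [left|right]; eauto.
  - intros [[J [HJ Ht]]|[J [HJ Ht]]]; exists J; split; auto; apply in_or_app; auto.
Qed.

Lemma pairwise_disjoint_nil : pairwise_disjoint nil.
Proof. intros i j Hi. simpl in Hi. lia. Qed.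

Lemma pairwise_disjoint_cons (K : R -> Prop) (L : list (R -> Prop)) :
  pairwise_disjoint L -> (forall J, In J L -> forall t, K t -> J t -> False) ->
  pairwise_disjoint (K :: L).
Proof.
  intros HL HK [|i] [|j] Hi Hj Hij t [H1 H2]; simpl in *.
  - lia.
  - apply (HK (nth j L (fun _ => False))) with t; auto. apply nth_In; lia.
  - apply (HK (nth i L (fun _ => False))) with t; auto. apply nth_In; lia.
  - apply (HL i j ltac:(lia) ltac:(lia) ltac:(lia) t); auto.
Qed.

Lemma pairwise_disjoint_cons_inv (K : R -> Prop) (L : list (R -> Prop)) :
  pairwise_disjoint (K :: L) ->
  pairwise_disjoint L /\ (forall J, In J L -> forall t, K t -> J t -> False).
Proof.
  intros H. split.
  - intros i j Hi Hj Hij t. apply (H (S i) (S j)); simpl; lia.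
  - intros J HJ t HKt HJt. destruct (In_nth L J (fun _ => False) HJ) as [j [Hj <-]].
    apply (H O (S j) ltac:(simpl; lia) ltac:(simpl; lia) ltac:(lia) t). simpl. auto.
Qed.

Lemma pairwise_disjoint_app (L1 L2 : list (R -> Prop)) :
  pairwise_disjoint L1 -> pairwise_disjoint L2 ->
  (forall J1 J2, In J1 L1 -> In J2 L2 -> forall t, J1 t -> J2 t -> False) ->
  pairwise_disjoint (L1 ++ L2).
Proof.
  induction L1 as [|K L1 IH]; intros H1 H2 H12; simpl; auto.
  destruct (pairwise_disjoint_cons_inv K L1 H1) as [H1' HK].
  apply pairwise_disjoint_cons.
  - apply IH; auto. intros J1 J2 HJ1 HJ2. apply H12; simpl; auto.
  - intros J HJ t HKt HJt. apply in_app_or in HJ. destruct HJ as [HJ|HJ].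
    + apply (HK J HJ t); auto.
    + apply (H12 K J) with t; simpl; auto.
Qed.

Section Oscillation.
Variables (a b lam : R) (g : R -> R).
Hypothesis Hg : continuous_eps a b g.

Definition window (p q t : R) : Prop := Icc a b t /\ p <= t < q.

(* Oscillations of g are counted around the two levels +-3 lam/2: between a
   point where |g| <= lam and one where |g| >= 2 lam, g crosses one of them
   with margin lam/2. *)
Definition level_hi : R := 3 * lam / 2.
Definition level_lo : R := - (3 * lam / 2).

Definition osc_le (c p q : R) (k : nat) : Prop :=
  forall n x s, (s = 1 \/ s = -1) -> window p q (x O) -> window p q (x n) ->
    alternates g c (lam / 2) s n x -> (n < k)%nat.

(* A point where |g| <= lam is an alternating family of one point around
   either level. *)
Lemma osc_le_pos (c p q t : R) (k : nat) : (c = level_hi \/ c = level_lo) ->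
  window p q t -> Rabs (g t) <= lam -> osc_le c p q k -> (1 <= k)%nat.
Proof.
  intros Hc Ht Hgt Hosc.
  pose proof (Rle_abs (g t)). pose proof (Rle_abs (- g t)). rewrite Rabs_Ropp in *.
  assert (Hone : forall s, (s = 1 \/ s = -1) -> lam / 2 <= s * (g t - c) -> (1 <= k)%nat).
  { intros s Hs Hst. apply (Hosc O (fun _ => t) s Hs Ht Ht). split; intros i Hi; [lia|].
    replace i with O by lia. simpl. lra. }
  unfold level_hi, level_lo in Hc.
  destruct Hc as [-> | ->]; [apply (Hone (-1)) | apply (Hone 1)]; lra.
Qed.

Lemma osc_le_shrink (c p p' q : R) (k : nat) :
  p <= p' -> osc_le c p q k -> osc_le c p' q k.
Proof.
  intros Hp Hosc n x s Hs [H0 H0'] [Hn Hn']. apply Hosc; auto; split; auto; lra.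
Qed.

(* If the window [p,q) contains points u, w <= t1 below and above the level
   c by lam/2, every alternating family in [t1,q) extends by one of them:
   the window [t1,q) has strictly fewer oscillations than [p,q). *)
Lemma osc_le_prepend (c p q t1 u w : R) (k : nat) :
  window p q u -> window p q w -> u <= t1 -> w <= t1 ->
  g u <= c - lam / 2 -> c + lam / 2 <= g w ->
  osc_le c p q (S k) -> osc_le c t1 q k.
Proof.
  intros Hu Hw Hut Hwt Hgu Hgw Hosc n x s Hs H0 Hn Halt.
  assert (Hext : forall z, window p q z -> z <= t1 -> lam / 2 <= - s * (g z - c) ->
                 (n < k)%nat).
  { intros z Hz Hzt Hgz.
    enough (S n < S k)%nat by lia.
    apply (Hosc (S n) (fun i => match i with O => z | S i => x i end) (- s));
      [destruct Hs as [-> | ->]; lra | exact Hz | |].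
    - destruct Hn as [? ?], Hz as [? ?]. split; auto; lra.
    - apply alternates_cons; auto. destruct H0 as [_ ?]. lra. }
  destruct Hs as [-> | ->]; [apply (Hext u) | apply (Hext w)]; auto; lra.
Qed.

(* One full passage from |g| <= lam at ss to |g| >= 2 lam at t1 uses up one
   oscillation around one of the two levels. *)
Lemma osc_budget_drop (p q ss t1 : R) (n1 n2 : nat) :
  window p q ss -> window p q t1 -> ss <= t1 ->
  Rabs (g ss) <= lam -> 2 * lam <= Rabs (g t1) ->
  osc_le level_hi p q n1 -> osc_le level_lo p q n2 ->
  exists m1 m2, (m1 + m2 < n1 + n2)%nat /\
    osc_le level_hi t1 q m1 /\ osc_le level_lo t1 q m2.
Proof.
  intros Hss Ht1 Hst Hgss Hgt1 Hhi Hlo.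
  pose proof (osc_le_pos level_hi p q ss n1 (or_introl eq_refl) Hss Hgss Hhi).
  pose proof (osc_le_pos level_lo p q ss n2 (or_intror eq_refl) Hss Hgss Hlo).
  assert (Hpt : p <= t1) by (destruct Hss as [_ [? _]]; lra).
  pose proof (Rle_abs (g ss)). pose proof (Rle_abs (- g ss)).
  pose proof (Rle_abs (g t1)). pose proof (Rle_abs (- g t1)).
  rewrite Rabs_Ropp in *. unfold level_hi, level_lo in *.
  destruct (Rle_dec 0 (g t1)) as [Hpos | Hneg].
  - rewrite Rabs_right in Hgt1 by lra.
    exists (n1 - 1)%nat, n2. split; [lia | split; [|apply (osc_le_shrink _ p); auto]].
    replace n1 with (S (n1 - 1)) in Hhi by lia.
    apply (osc_le_prepend _ p q t1 ss t1); auto; lra.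
  - rewrite Rabs_left in Hgt1 by lra.
    exists n1, (n2 - 1)%nat. split; [lia | split; [apply (osc_le_shrink _ p); auto|]].
    replace n2 with (S (n2 - 1)) in Hlo by lia.
    apply (osc_le_prepend _ p q t1 t1 ss); auto; lra.
Qed.

Definition covers (p q : R) (L : list (R -> Prop)) : Prop :=
  (forall J, In J L -> is_interval J) /\ pairwise_disjoint L /\
  (forall J, In J L -> forall t, J t -> window p q t /\ Rabs (g t) < 2 * lam) /\
  (forall t, window p q t -> Rabs (g t) < lam -> union_of L t).

Lemma covers_nil (p q : R) :
  (forall t, window p q t -> lam <= Rabs (g t)) -> covers p q nil.
Proof.
  intros H. repeat split; try (simpl; tauto); [apply pairwise_disjoint_nil|].
  intros t Ht Hgt. specialize (H t Ht). lra.
Qed.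

Lemma covers_cons (p q ss t1 : R) (L : list (R -> Prop)) :
  p <= ss -> ss <= t1 -> t1 <= q -> covers t1 q L ->
  (forall t, window ss t1 t -> Rabs (g t) < 2 * lam) ->
  (forall t, window p q t -> Rabs (g t) < lam -> ss <= t) ->
  covers p q (window ss t1 :: L).
Proof.
  intros Hp Hst Hq [Hint [Hdisj [Hin Hcov]]] Hmid Hfirst. split; [|split; [|split]].
  - intros J [<- | HJ]; auto. intros x y z [Hx Hx'] [Hz Hz'] Hxyz.
    split; [unfold Icc in *|]; lra.
  - apply pairwise_disjoint_cons; auto.
    intros J HJ t [_ Ht] HJt. destruct (Hin J HJ t HJt) as [[_ ?] _]. lra.
  - intros J [<- | HJ] t Ht.
    + split; [destruct Ht as [? ?]; split; auto; lra | auto].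
    + destruct (Hin J HJ t Ht) as [[[? ?] [? ?]] ?]. repeat split; auto; lra.
  - intros t Ht Hgt. apply union_cons. pose proof (Hfirst t Ht Hgt).
    destruct Ht as [Hti Ht]. destruct (Rlt_dec t t1).
    + left. split; auto; lra.
    + right. apply Hcov; auto. split; auto; lra.
Qed.

Lemma covers_app (p q s : R) (L1 L2 : list (R -> Prop)) : p <= q -> q <= s ->
  covers p q L1 -> covers q s L2 -> covers p s (L1 ++ L2).
Proof.
  intros Hpq Hqs [Hint1 [Hdisj1 [Hin1 Hcov1]]] [Hint2 [Hdisj2 [Hin2 Hcov2]]].
  split; [|split; [|split]].
  - intros J HJ. apply in_app_or in HJ. destruct HJ; auto.
  - apply pairwise_disjoint_app; auto. intros J1 J2 HJ1 HJ2 t Ht1 Ht2.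
    destruct (Hin1 J1 HJ1 t Ht1) as [[_ ?] _]. destruct (Hin2 J2 HJ2 t Ht2) as [[_ ?] _].
    lra.
  - intros J HJ t Ht. apply in_app_or in HJ.
    destruct HJ as [HJ | HJ]; [destruct (Hin1 J HJ t Ht) | destruct (Hin2 J HJ t Ht)];
      unfold window in *; intuition lra.
  - intros t [Hti Ht] Hgt. apply union_app. destruct (Rlt_dec t q).
    + left. apply Hcov1; auto. split; auto; lra.
    + right. apply Hcov2; auto. split; auto; lra.
Qed.

(* Greedy choice of the first interval of a cover of [p,q): ss is the first
   point where |g| < lam (up to closure), t1 the first point after ss where
   |g| >= 2 lam, or q if there is none. *)
Lemma first_interval (p q : R) :
  (exists t, window p q t /\ Rabs (g t) < lam) ->
  exists ss t1, p <= ss /\ ss <= t1 /\ t1 <= q /\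
    (forall t, window p q t -> Rabs (g t) < lam -> ss <= t) /\
    (forall t, window ss t1 t -> Rabs (g t) < 2 * lam) /\
    (t1 = q \/ (window p q ss /\ window p q t1 /\
                Rabs (g ss) <= lam /\ 2 * lam <= Rabs (g t1))).
Proof.
  intros [t0 [Ht0 Hgt0]].
  destruct (inf_attained a b lam (fun t => Rabs (g t))
              (fun t => window p q t /\ Rabs (g t) < lam) (continuous_eps_abs a b g Hg))
    as [ss [Hssi [Hgss [Hss_low Hss_glb]]]].
  { exists t0; auto. }
  { intros t [[Ht _] Hgt]; split; auto; lra. }
  assert (Hpss : p <= ss) by (apply Hss_glb; intros t [[_ [? _]] _]; auto).
  assert (Hss_t0 : ss <= t0) by (apply Hss_low; auto).
  destruct Ht0 as [Ht0i [Hpt0 Ht0q]].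
  destruct (classic (exists t, window ss q t /\ 2 * lam <= Rabs (g t)))
    as [Hlarge | Hnone].
  - destruct (inf_attained a b (- (2 * lam)) (fun t => - Rabs (g t))
                (fun t => window ss q t /\ 2 * lam <= Rabs (g t))
                (continuous_eps_opp a b _ (continuous_eps_abs a b g Hg)) Hlarge)
      as [t1 [Ht1i [Hgt1 [Ht1_low Ht1_glb]]]].
    { intros t [[Ht _] Hgt]; split; auto; lra. }
    destruct Hlarge as [t2 [[Ht2i [Hst2 Ht2q]] Hgt2]].
    assert (Hst1 : ss <= t1) by (apply Ht1_glb; intros t [[_ [? _]] _]; auto).
    assert (Ht12 : t1 <= t2) by (apply Ht1_low; split; auto; split; auto).
    exists ss, t1. repeat split; auto; try lra.
    + intros t [Hti [Hsst Htt1]]. apply Rnot_le_lt. intros Hgt.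
      assert (t1 <= t) by (apply Ht1_low; repeat split; auto; destruct Hti; lra). lra.
    + right. destruct Hssi, Ht1i. repeat split; auto; lra.
  - exists ss, q. repeat split; auto; try lra.
    intros t Ht. apply Rnot_le_lt. intros Hgt. apply Hnone. eauto.
Qed.

(* A window with at most n1 (resp. n2) oscillations around level_hi
   (resp. level_lo) is covered by at most n1 + n2 intervals: induction on
   n1 + n2, each greedily chosen interval using up one oscillation. *)
Lemma greedy_cover (n1 n2 : nat) (p q : R) :
  osc_le level_hi p q n1 -> osc_le level_lo p q n2 ->
  exists L, covers p q L /\ (length L <= n1 + n2)%nat.
Proof.
  remember (n1 + n2)%nat as k eqn:Hk. revert n1 n2 p Hk.
  induction k as [k IH] using lt_wf_ind. intros n1 n2 p Hk Hhi Hlo.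
  destruct (classic (exists t, window p q t /\ Rabs (g t) < lam)) as [Hsmall | Hnone].
  2: { exists nil. split; [|simpl; lia]. apply covers_nil.
       intros t Ht. apply Rnot_lt_le. intros Hgt. apply Hnone. eauto. }
  destruct (first_interval p q Hsmall)
    as [ss [t1 [Hpss [Hst1 [Ht1q [Hfirst [Hmid Hend]]]]]]].
  destruct Hsmall as [t0 [Ht0 Hgt0]].
  pose proof (osc_le_pos level_hi p q t0 n1 (or_introl eq_refl) Ht0 ltac:(lra) Hhi).
  destruct Hend as [-> | [Hss [Ht1 [Hgss Hgt1]]]].
  - exists (window ss q :: nil). split; [|simpl; lia].
    apply covers_cons; auto.
    apply covers_nil. intros t [_ Ht]. lra.
  - destruct (osc_budget_drop p q ss t1 n1 n2 Hss Ht1 Hst1 Hgss Hgt1 Hhi Hlo)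
      as [m1 [m2 [Hm [Hhi' Hlo']]]].
    destruct (IH (m1 + m2)%nat ltac:(lia) m1 m2 t1 eq_refl Hhi' Hlo') as [L [HL Hlen]].
    exists (window ss t1 :: L). split; [apply covers_cons; auto | simpl; lia].
Qed.

Lemma windows_cover (d : R) (r : nat) : 0 < d ->
  (forall c p q, q - p <= d -> osc_le c p q r) ->
  forall m, exists L, covers a (a + INR m * d) L /\ (length L <= m * (2 * r))%nat.
Proof.
  intros Hd Hosc m. induction m as [|m [L1 [HL1 Hlen1]]].
  - exists nil. split; [|simpl; lia]. apply covers_nil. intros t [_ Ht]. simpl in Ht. lra.
  - assert (Hwin : a + INR (S m) * d - (a + INR m * d) <= d) by (rewrite S_INR; lra).
    destruct (greedy_cover r r (a + INR m * d) (a + INR (S m) * d)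
                (Hosc _ _ _ Hwin) (Hosc _ _ _ Hwin)) as [L2 [HL2 Hlen2]].
    exists (L1 ++ L2). split.
    + pose proof (pos_INR m).
      apply (covers_app _ (a + INR m * d)); auto; [nra | rewrite S_INR; lra].
    + rewrite length_app. lia.
Qed.
End Oscillation.

(* If |g^(r)| <= C on [a,b] and C d^r < (lam/2) 2^r, a window of length d
   carries at most r oscillations of g: r + 1 alternating points would force
   |g^(r)| >= (lam/2) (2/d)^r > C. *)
Lemma osc_le_of_derivative_bound (a b lam C d : R) (r : nat) (g : R -> R)
    (D : nat -> R -> R) :
  (1 <= r)%nat -> Cr_derivs a b r g D -> 0 < lam -> 0 < d ->
  (forall t, Icc a b t -> Rabs (D r t) <= C) -> C * d ^ r < lam / 2 * 2 ^ r ->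
  forall c p q, q - p <= d -> osc_le a b lam g c p q r.
Proof.
  intros Hr [HD0 [Hder _]] Hlam Hd HC Hsmall c p q Hpq n x s Hs [Hx0 [Hp _]] [Hxn [_ Hq]] Halt.
  destruct (Nat.lt_ge_cases n r) as [|Hrn]; auto. exfalso.
  destruct r as [|k]; [lia|].
  assert (HaltD : alternates (D O) c (lam / 2) s (S k) x).
  { apply (alternates_prefix _ _ _ _ n); [lia|].
    destruct Halt as [Hsorted Hsign]. split; auto. intros i Hi. rewrite HD0. auto. }
  assert (Hxk : x (S k) <= x n) by (apply (sorted_le n x (proj1 Halt)); lia).
  destruct Hx0 as [Ha _], Hxn as [_ Hb].
  destruct (alternation_forces_large_derivative a b (S k) D Hder k O x c (lam / 2) s d
              ltac:(lia) ltac:(lra) Hd Hs Ha ltac:(lra) ltac:(lra) HaltD)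
    as [xi [Hxi Hbound]].
  specialize (HC xi Hxi).
  assert (Hscale : (2 / d) ^ S k * d ^ S k = 2 ^ S k).
  { rewrite <- Rpow_mult_distr. f_equal. field. lra. }
  assert (Hdk : 0 < d ^ S k) by (apply pow_lt; lra).
  enough (lam / 2 * 2 ^ S k <= C * d ^ S k) by lra.
  rewrite <- Hscale, <- Rmult_assoc. apply Rmult_le_compat_r; lra.
Qed.

Lemma rootn_nonneg (r : nat) (x : R) : 0 <= rootn r x.
Proof. unfold rootn. destruct Rle_dec; [lra | left; apply exp_pos]. Qed.

Lemma rootn_pow (r : nat) (x : R) : (1 <= r)%nat -> 0 <= x -> rootn r x ^ r = x.
Proof.
  intros Hr Hx. unfold rootn. destruct Rle_dec as [Hle | Hgt].
  - replace x with 0 by lra. apply pow_i. lia.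
  - rewrite <- Rpower_pow by apply exp_pos.
    rewrite Rpower_mult, Rinv_l, Rpower_1; [lra | lra |].
    apply not_0_INR. lia.
Qed.

Lemma Rpower_neg_root_pow (r : nat) (x : R) : (1 <= r)%nat -> 0 < x ->
  Rpower x (- / INR r) ^ r = / x.
Proof.
  intros Hr Hx. rewrite <- Rpower_pow, Rpower_mult by apply exp_pos.
  replace (- / INR r * INR r) with (- (1)) by (field; apply not_0_INR; lia).
  rewrite Rpower_Ropp, Rpower_1; auto.
Qed.

(* Choice of the window length d = (b-a)/(2P+1), where
   P = (b-a) C^(1/r) lam^(-1/r): then C d^r = lam (P/(2P+1))^r < lam, and
   [a,b] is covered by m <= 2P + 2 windows. *)
Lemma window_parameters (a b lam C : R) (r : nat) :
  a < b -> (1 <= r)%nat -> 0 < lam -> 0 <= C ->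
  exists d m, 0 < d /\ C * d ^ r < lam / 2 * 2 ^ r /\ b < a + INR m * d /\
    INR m <= 2 * ((b - a) * rootn r C * Rpower lam (- / INR r)) + 2.
Proof.
  intros Hab Hr Hlam HC.
  set (P := (b - a) * rootn r C * Rpower lam (- / INR r)).
  assert (HP : 0 <= P).
  { unfold P. apply Rmult_le_pos; [apply Rmult_le_pos; [lra | apply rootn_nonneg]|].
    left. apply exp_pos. }
  set (d := (b - a) / (2 * P + 1)).
  assert (Hd : 0 < d) by (apply Rdiv_lt_0_compat; lra).
  assert (HCd : C * d ^ r = lam * (P / (2 * P + 1)) ^ r).
  { unfold d, P, Rdiv. rewrite !Rpow_mult_distr, rootn_pow, Rpower_neg_root_pow; auto.
    field. lra. }
  assert (Hratio : (P / (2 * P + 1)) ^ r < 1).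
  { apply pow_lt_1_compat; [|lia]. split.
    - apply Rdiv_le_0_compat; lra.
    - apply Rmult_lt_reg_r with (2 * P + 1); [lra|].
      unfold Rdiv. rewrite Rmult_assoc, Rinv_l; lra. }
  assert (H2r : 2 <= 2 ^ r).
  { destruct r as [|k]; [lia|]. simpl. pose proof (pow_R1_Rle 2 k ltac:(lra)). lra. }
  destruct (nfloor_ex (2 * P + 1) ltac:(lra)) as [n [Hn1 Hn2]].
  exists d, (S n). repeat split; auto.
  - rewrite HCd. nra.
  - rewrite S_INR. replace b with (a + (2 * P + 1) * d) at 1 by (unfold d; field; lra).
    apply Rplus_lt_compat_l, Rmult_lt_compat_r; lra.
  - rewrite S_INR. fold P. lra.
Qed.

Theorem corollary2p2 (a b : R) (r : nat) (g : R -> R) (D : nat -> R -> R) :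
  a < b -> (1 <= r)%nat ->
  Cr_derivs a b r g D ->
  forall lambda : R, 0 < lambda -> lambda <= supnorm a b g ->
  exists L : list (R -> Prop),
    (forall J, In J L -> is_interval J) /\
    pairwise_disjoint L /\
    INR (length L) <=
      30 * INR r * (1 + (b - a) * rootn r (supnorm a b (D r))
                            * Rpower lambda (- / INR r)) /\
    (forall t, Icc a b t -> Rabs (g t) < lambda -> union_of L t) /\
    (forall t, union_of L t -> Icc a b t /\ Rabs (g t) < 8 * lambda).
Proof.
  intros Hab Hr HCr lam Hlam _.
  pose proof HCr as [HD0 [Hder Hcont]].
  set (C := supnorm a b (D r)).
  assert (HC : forall t, Icc a b t -> Rabs (D r t) <= C).
  { apply supnorm_bound; [lra | apply continuous_on_Icc_eps; auto]. }
  assert (HC0 : 0 <= C).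
  { apply Rle_trans with (Rabs (D r a)); [apply Rabs_pos | apply HC; split; lra]. }
  assert (Hg : continuous_eps a b g).
  { intros x Hx e He.
    destruct (derive_on_continuous a b _ _ (Hder O ltac:(lia)) x Hx e He) as [h [Hh Hnear]].
    exists h. split; auto. intros y Hy Hyx. rewrite <- !HD0. auto. }
  destruct (window_parameters a b lam C r Hab Hr Hlam HC0) as [d [m [Hd [Hsmall [Hm HmP]]]]].
  destruct (windows_cover a b lam g Hg d r Hd
              (osc_le_of_derivative_bound a b lam C d r g D Hr HCr Hlam Hd HC Hsmall) m)
    as [L [[Hint [Hdisj [Hin Hcov]]] Hlen]].
  exists L. split; [|split; [|split; [|split]]]; auto.
  - apply le_INR in Hlen. rewrite !mult_INR in Hlen. simpl in Hlen.
    pose proof (pos_INR m). assert (1 <= INR r) by (apply (le_INR 1); lia).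
    set (P := (b - a) * rootn r C * Rpower lam (- / INR r)) in *. nra.
  - intros t Ht Hgt. apply Hcov; auto. split; auto. destruct Ht. lra.
  - intros t [J [HJ Ht]]. destruct (Hin J HJ t Ht) as [[Hti _] Hgt]. split; auto; lra.
Qed.
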